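(* Let $\phi:\mathbb{R}\to\mathbb{R}$ be differentiable, $x\in\mathbb{R}^{k_0}$ with $\|x\|_2=1$, and $a,b\in\mathbb{R}^k$ with $a^T\phi(b)=1$, and let $f(z)=xa^T\phi(bx^Tz)$ (so $f(x)=x$). Then $\lambda_1(\mathbf{J}(f(x)))=a^T(\phi'(b)\odot b)$.
   Context: $\phi,\phi'$ are applied coordinatewise; $\odot$ is the Hadamard (coordinatewise) product. $\mathbf{J}(f(x))$ is the Jacobian of $f$ at $x$ and $\lambda_1$ its top eigenvalue (eigenvalue of largest absolute value). In the paper this setting arises as the trained weights $A^{(\infty)}=xa^T$, $B^{(\infty)}=bx^T$ of a 1-hidden-layer autoencoder $A\phi(Bz)$ trained to zero error on the single example $x$. *)

From HB Require Import structures.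
From mathcomp Require Import all_boot all_order all_algebra.
From mathcomp Require Import all_classical all_reals all_analysis.
Set Implicit Arguments. Unset Strict Implicit. Unset Printing Implicit Defensive.
Import Order.TTheory GRing.Theory Num.Theory.
Import numFieldNormedType.Exports.
Local Open Scope ring_scope.

Definition top_eigenvalue (R : realType) (n : nat) (A : 'M[R]_n) (lam : R) :=
  eigenvalue A lam /\ (forall mu : R, eigenvalue A mu -> `|mu| <= `|lam|).

Definition cw (R : realType) (k : nat) (phi : R -> R) (v : 'rV[R]_k) : 'rV[R]_k :=
  map_mx phi v.

From HB Require Import structures.
From mathcomp Require Import all_boot all_order all_algebra.
From mathcomp Require Import all_classical all_reals all_analysis.
Import Order.TTheory GRing.Theory Num.Theory.
Import numFieldNormedType.Exports.
Local Open Scope ring_scope.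

(* f is the ridge function z |-> g (z . x) x with profile g t = a . phi (t b),
   so its Jacobian at x is the rank-one matrix g'(1) x^T x.  A rank-one matrix
   u^T w has the eigenvector w for the eigenvalue w . u, and 0 is its only
   other eigenvalue.  Here x . x = 1, so the top eigenvalue is
   g'(1) = a . (phi'(b) * b). *)

Lemma row_mul_outer {F : fieldType} {n m} (u v : 'rV[F]_n) (w : 'rV[F]_m) :
  v *m (u^T *m w) = (v *m u^T) 0 0 *: w.
Proof. by rewrite mulmxA {1}[v *m u^T]mx11_scalar mul_scalar_mx. Qed.

Section RankOneEigenvalues.
Variables (F : fieldType) (n : nat) (u w : 'rV[F]_n).

Lemma eigenvalue_outer : w != 0 -> eigenvalue (u^T *m w) ((w *m u^T) 0 0).
Proof. by move=> w0; apply/eigenvalueP; exists w; rewrite ?row_mul_outer. Qed.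

Lemma eigenvalue_outerP mu :
  eigenvalue (u^T *m w) mu -> mu = 0 \/ mu = (w *m u^T) 0 0.
Proof.
case/eigenvalueP => v; rewrite row_mul_outer => vE v0.
have [->|mu0] := eqVneq mu 0; [by left | right].
have vu0 : (v *m u^T) 0 0 != 0.
  apply: contraNneq v0 => vu0; move: vE; rewrite vu0 scale0r => /esym/eqP.
  by rewrite scaler_eq0 (negPf mu0).
apply: (mulIf vu0).
have /(congr1 (fun v => (v *m u^T) 0 0)) := vE.
by rewrite -!scalemxAl !mxE mulrC.
Qed.

End RankOneEigenvalues.

Lemma top_eigenvalue_outer {R : realType} {n} (u w : 'rV[R]_n) :
  w != 0 -> top_eigenvalue (u^T *m w) ((w *m u^T) 0 0).
Proof.
move=> w0; split=> [|mu /eigenvalue_outerP[]->//]; first exact: eigenvalue_outer.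
by rewrite normr0.
Qed.

Lemma is_diff_dotmx {R : numFieldType} {n} (u x0 : 'rV[R]_n) :
  is_diff x0 (fun z : 'rV[R]_n => (z *m u^T) 0 0) (fun z => (z *m u^T) 0 0).
Proof.
pose dot (z : 'rV[R]_n) := (z *m u^T) 0 0.
have dot_linear : linear dot.
  by move=> r v z; rewrite /dot mulmxDl -scalemxAl !mxE.
pose dotL : {linear 'rV[R]_n -> R} :=
  HB.pack dot (GRing.isLinear.Build _ _ _ _ _ dot_linear).
have dotE : dot = \sum_(i < n) (fun z : 'rV[R]_n => z 0 i * u 0 i).
  apply/funext => z; rewrite fct_sumE /dot mxE.
  by apply: eq_bigr => i _; rewrite mxE.
have dot_cont : continuous dotL.
  move=> z; apply: differentiable_continuous; rewrite /= dotE.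
  apply: differentiable_sum => i.
  by apply: differentiableM; first exact: differentiable_coord.
apply: DiffDef; first exact: (linear_differentiable x0 dot_cont).
exact: (diff_lin x0 dot_cont).
Qed.

Lemma jacobian_ridge {R : numFieldType} {n m} (g : R -> R) (u x0 : 'rV[R]_n)
    (w : 'rV[R]_m) :
  derivable g ((x0 *m u^T) 0 0) 1 ->
  jacobian (fun z => g ((z *m u^T) 0 0) *: w) x0
  = (derive1 g ((x0 *m u^T) 0 0) *: u)^T *m w.
Proof.
move=> dg; have dot_diff := is_diff_dotmx u x0.
have dgdot : differentiable (g \o fun z : 'rV[R]_n => (z *m u^T) 0 0) x0.
  by apply: differentiable_comp => //; exact/derivable1_diffP.
apply/row_matrixP => i; rewrite !rowE /jacobian mul_rV_lin1 (diffZl w dgdot).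
rewrite diff_comp //; last exact/derivable1_diffP.
rewrite /= diff_val (deriv1E dg) row_mul_outer linearZ /= -scalemxAr.
by rewrite [in RHS]mxE mulrC.
Qed.

Lemma is_derive_cw_scale {R : realType} {k} {phi : R -> R} (a b : 'rV[R]_k)
    (t : R) :
  (forall s, derivable phi s 1) ->
  is_derive t 1 (fun s => (cw phi (s *: b) *m a^T) 0 0)
    ((map2_mx *%R (cw (derive1 phi) (t *: b)) b *m a^T) 0 0).
Proof.
move=> dphi.
have -> : (fun s => (cw phi (s *: b) *m a^T) 0 0)
    = \sum_(j < k) (fun s => phi (s * b 0 j) * a 0 j).
  apply/funext => s; rewrite fct_sumE mxE.
  by apply: eq_bigr => j _; rewrite !mxE.
rewrite mxE; apply: is_derive_sum => j; rewrite !mxE.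
have phi_j : is_derive (t * b 0 j) 1 phi (derive1 phi (t * b 0 j)).
  by rewrite derive1E; exact: derivableP.
have scale_j : is_derive t 1 (fun s : R => s * b 0 j) (b 0 j).
  have := is_deriveM (is_derive_id t 1) (is_derive_cst (b 0 j) t 1).
  by rewrite scaler0 add0r [_ *: 1]mulr1.
have := is_deriveM (is_derive1_comp (g := *%R^~ (b 0 j)) phi_j scale_j)
  (is_derive_cst (a 0 j) t 1).
by rewrite scaler0 add0r [_ *: _]mulrC.
Qed.

Theorem proposition4 (R : realType) (k0 k : nat) (phi : R -> R)
  (x : 'rV[R]_k0) (a b : 'rV[R]_k) :
  (forall t : R, derivable phi t 1) ->
  Num.sqrt (\sum_(i < k0) x 0 i ^+ 2) = 1 ->
  (cw phi b *m a^T) 0 0 = 1 ->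
  top_eigenvalue
    (jacobian (fun z : 'rV[R]_k0 => (cw phi ((z *m x^T) *m b) *m a^T) *m x) x)
    ((map2_mx (fun u v => u * v) (cw (derive1 phi) b) b *m a^T) 0 0).
Proof.
(* a . phi(b) = 1 only makes x a fixed point of f; the Jacobian ignores it. *)
move=> dphi nx _.
pose g s := (cw phi (s *: b) *m a^T) 0 0.
have xx1 : (x *m x^T) 0 0 = 1.
  have sq_ge0 : 0 <= \sum_(i < k0) x 0 i ^+ 2.
    by apply: sumr_ge0 => i _; exact: sqr_ge0.
  rewrite mxE -[RHS](expr1n _ 2) -nx sqr_sqrtr //.
  by apply: eq_bigr => i _; rewrite mxE expr2.
have x0 : x != 0.
  by apply: contra_eqN xx1 => /eqP->; rewrite mul0mx mxE eq_sym oner_eq0.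
have fE : (fun z => (cw phi ((z *m x^T) *m b) *m a^T) *m x)
    = fun z => g ((z *m x^T) 0 0) *: x.
  apply/funext => z; rewrite {1}[z *m x^T]mx11_scalar mul_scalar_mx.
  by rewrite [cw _ _ *m a^T]mx11_scalar mul_scalar_mx.
have g'1 := is_derive_cw_scale a b 1 dphi; rewrite scale1r in g'1.
rewrite fE jacobian_ridge xx1 ?derive1E ?derive_val //.
set c := (map2_mx _ _ _ *m _) 0 0.
have cE : (x *m (c *: x)^T) 0 0 = c.
  by rewrite linearZ /= -scalemxAr [LHS]mxE xx1 mulr1.
by have := top_eigenvalue_outer (c *: x) _ x0; rewrite cE.
Qed.
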